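(* Let $t \geq 1$ and $k \geq 1$ be integers, and let $\mathcal{F}$ be a finite family of finite sets with $\alpha(\mathcal{F}) \geq t$. Let $\mathcal{A}_1, \dots, \mathcal{A}_k$ be cross-$t$-intersecting sub-families of $\mathcal{F}$. If $k \geq \kappa(\mathcal{F},t)$, then \[\sum_{i=1}^k |\mathcal{A}_i| \leq k\, l(\mathcal{F},t) \quad \text{and} \quad \prod_{i=1}^k |\mathcal{A}_i| \leq \left(l(\mathcal{F},t)\right)^k,\] and both bounds are attained if $\mathcal{A}_1 = \dots = \mathcal{A}_k = \mathcal{L}$ for some largest $t$-intersecting sub-family $\mathcal{L}$ of $\mathcal{F}$. Moreover, if $k > \kappa(\mathcal{F},t)$, then in both inequalities equality holds only if $\mathcal{A}_1 = \dots = \mathcal{A}_k = \mathcal{L}$ for some largest $t$-intersecting sub-family $\mathcal{L}$ of $\mathcal{F}$.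
   Context: All sets and families are finite. A set $A$ $t$-intersects a set $B$ if $|A \cap B| \geq t$. A family $\mathcal{A}$ is $t$-intersecting if $|A \cap B| \geq t$ for all $A, B \in \mathcal{A}$ with $A \neq B$. Families $\mathcal{A}_1, \dots, \mathcal{A}_k$ (not necessarily distinct or non-empty) are cross-$t$-intersecting if for all $i \neq j$ in $\{1,\dots,k\}$, $|A \cap B| \geq t$ for every $A \in \mathcal{A}_i$ and $B \in \mathcal{A}_j$. For a non-empty family $\mathcal{F}$: $\alpha(\mathcal{F}) = \max\{|F| : F \in \mathcal{F}\}$; $l(\mathcal{F},t)$ is the size of a largest $t$-intersecting sub-family of $\mathcal{F}$. For a family $\mathcal{A}$, $\mathcal{A}^{t,+} = \{A \in \mathcal{A} : |A \cap B| \geq t \text{ for all } B \in \mathcal{A} \text{ with } B \neq A\}$ and $\mathcal{A}^{t,-} = \mathcal{A} \setminus \mathcal{A}^{t,+}$. For $\mathcal{A} \subseteq \mathcal{F}$, $\beta(\mathcal{F},t,\mathcal{A}) = \frac{l(\mathcal{F},t) - |\mathcal{A}^{t,+}|}{|\mathcal{A}^{t,-}|}$ if $\mathcal{A}^{t,-} \neq \emptyset$, and $\beta(\mathcal{F},t,\mathcal{A}) = \frac{l(\mathcal{F},t)}{|\mathcal{F}|}$ if $\mathcal{A}^{t,-} = \emptyset$. Then $\beta(\mathcal{F},t) = \min\{\beta(\mathcal{F},t,\mathcal{A}) : \mathcal{A} \subseteq \mathcal{F}\}$ (which is positive) and $\kappa(\mathcal{F},t) = 1/\beta(\mathcal{F},t)$.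 *)

From mathcomp Require Import all_boot all_order all_algebra.
Set Implicit Arguments. Unset Strict Implicit. Unset Printing Implicit Defensive.
Import Order.TTheory GRing.Theory Num.Theory.

Section Defs.
Variable T : finType.
Implicit Types (F A : {set {set T}}) (t : nat).

Definition alpha F : nat := \max_(X in F) #|X|.

Definition t_intersecting t A : bool :=
  [forall X in A, forall Y in A, (X != Y) ==> (t <= #|X :&: Y|)].

Definition lFt F t : nat :=
  \max_(G : {set {set T}} | (G \subset F) && t_intersecting t G) #|G|.

Definition largest_tint F t (L : {set {set T}}) : bool :=
  [&& L \subset F, t_intersecting t L & #|L| == lFt F t].

Definition Aplus t A : {set {set T}} :=
  [set X in A | [forall Y in A, (Y != X) ==> (t <= #|X :&: Y|)]].
Definition Aminus t A : {set {set T}} := A :\: Aplus t A.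

Definition betaA F t A : rat := (
  if Aminus t A != set0 then
    ((lFt F t)%:R - (#|Aplus t A|)%:R) / (#|Aminus t A|)%:R
  else (lFt F t)%:R / (#|F|)%:R)%R.

Definition betaF F t : rat :=
  betaA F t [arg min_(A < (set0 : {set {set T}}) | A \subset F) betaA F t A]%O.

Definition kappa F t : rat := (betaF F t)^-1.

Definition cross_tint t k (As : 'I_k -> {set {set T}}) : Prop :=
  forall i j : 'I_k, i != j ->
    forall X Y : {set T}, X \in As i -> Y \in As j -> t <= #|X :&: Y|.

End Defs.

From mathcomp Require Import all_boot all_order all_algebra.
From mathcomp Require Import zify.
Import Order.TTheory GRing.Theory Num.Theory.
Set Implicit Arguments. Unset Strict Implicit.

(* Let U be the union of the A_i. A member of U outside U^{t,+} fails to
   t-intersect some member of U, hence (by cross-intersection) lies in at most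
   one A_i, so  sum |A_i| <= k |U^{t,+}| + |U^{t,-}|.  The definition of beta
   and k beta >= 1 give |U^{t,-}| <= k (l - |U^{t,+}|), whence the sum bound;
   the product bound follows by AM-GM. When k beta > 1 the last inequality is
   strict unless U^{t,-} is empty, so equality forces U to be t-intersecting
   and every A_i to equal U. *)

Lemma AGM_nat k (f : 'I_k -> nat) :
  ((\prod_(i < k) f i)%:R <= ((\sum_(i < k) f i)%:R / k%:R) ^+ k :> rat)%R.
Proof.
have := (@leif_AGM rat _ predT (fun i => (f i)%:R%R) _).1.
by rewrite /= card_ord natr_prod natr_sum; apply=> i _; apply: ler0n.
Qed.

Lemma prod_le_pow_of_sum_le k (f : 'I_k -> nat) l :
  \sum_(i < k) f i <= k * l -> \prod_(i < k) f i <= l ^ k.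
Proof.
case: k f => [|k] f hs; first by rewrite big_ord0.
rewrite -(ler_nat rat) natrX (le_trans (AGM_nat f)) // ler_pXn2r ?nnegrE ?divr_ge0 //.
by rewrite ler_pdivrMr ?ltr0n // -natrM ler_nat mulnC.
Qed.

Lemma sum_ge_of_prod_eq_pow k (f : 'I_k -> nat) l :
  \prod_(i < k) f i = l ^ k -> k * l <= \sum_(i < k) f i.
Proof.
case: k f => [|k] f hp; first by rewrite mul0n.
have := AGM_nat f; rewrite hp natrX ler_pXn2r ?nnegrE ?divr_ge0 //.
by rewrite ler_pdivlMr ?ltr0n // -natrM ler_nat mulnC.
Qed.

Lemma eq_bound_of_sum_eq k (f : 'I_k -> nat) l :
  (forall i, f i <= l) -> \sum_(i < k) f i = k * l -> forall i, f i = l.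
Proof.
move=> fl hs i.
have [_ /esym] := leqif_sum (fun j (_ : predT j) => leqif_eq (fl j)).
by rewrite sum_nat_const card_ord hs eqxx => /forallP/(_ i)/eqP.
Qed.

Section IntersectingFamilies.
Variables (T : finType) (t : nat).
Implicit Types (F A G L : {set {set T}}).

Lemma card_le_lFt F G : G \subset F -> t_intersecting t G -> #|G| <= lFt F t.
Proof. by move=> sGF tG; apply: (leq_bigmax_cond G); rewrite sGF tG. Qed.

Lemma t_intersecting1 (X : {set T}) : t_intersecting t [set X].
Proof.
by apply/forall_inP => Y /set1P ->; apply/forall_inP => Z /set1P ->; rewrite eqxx.
Qed.

Lemma exists_largest_tint F : exists L, largest_tint F t L.
Proof.
have P0 : (set0 \subset F) && t_intersecting t (set0 : {set {set T}}).
  by rewrite sub0set; apply/forall_inP => X; rewrite inE.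
exists [arg max_(G > set0 | (G \subset F) && t_intersecting t G) #|G|].
rewrite /largest_tint /lFt (bigop.bigmax_eq_arg set0 P0).
by case: arg_maxnP => // G /andP[-> ->] _; rewrite eqxx.
Qed.

Lemma lFt_gt0 F : F != set0 -> 0 < lFt F t.
Proof.
case/set0Pn => X XF; rewrite -(cards1 X).
by apply: card_le_lFt; rewrite ?sub1set ?t_intersecting1.
Qed.

Lemma Aplus_subset A : Aplus t A \subset A.
Proof. by apply/subsetP => X; rewrite inE => /andP[]. Qed.

Lemma Aplus_tint A : t_intersecting t (Aplus t A).
Proof.
apply/forall_inP => X; rewrite inE => /andP[_ /forall_inP hX].
apply/forall_inP => Y; rewrite inE => /andP[YA _]; apply/implyP => XY.
by have := hX Y YA; rewrite eq_sym XY.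
Qed.

Lemma card_Aplus_le_lFt F A : A \subset F -> #|Aplus t A| <= lFt F t.
Proof.
by move=> sAF; apply: card_le_lFt (Aplus_tint _); apply: subset_trans (Aplus_subset _) sAF.
Qed.

Lemma Aplus_id_of_Aminus0 A : Aminus t A = set0 -> Aplus t A = A.
Proof.
move/eqP; rewrite setD_eq0 => sAP.
by apply/eqP; rewrite eqEsubset sAP Aplus_subset.
Qed.

(* Adding any member of A^{t,-} to A^{t,+} keeps it t-intersecting. *)
Lemma card_Aplus_lt_lFt F A :
  A \subset F -> Aminus t A != set0 -> #|Aplus t A| < lFt F t.
Proof.
move=> sAF /set0Pn[X]; rewrite inE => /andP[XnP XA].
have <- : #|X |: Aplus t A| = #|Aplus t A|.+1 by rewrite cardsU1 XnP.
apply: card_le_lFt.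
  by rewrite subUset sub1set (subsetP sAF) // (subset_trans (Aplus_subset _)).
have tX Y : Y \in Aplus t A -> Y != X -> t <= #|X :&: Y|.
  rewrite inE => /andP[_ /forall_inP/(_ X XA)/implyP XY_t] YX.
  by rewrite setIC XY_t // eq_sym.
apply/forall_inP => Y /setU1P[-> | YP]; apply/forall_inP => Z /setU1P[-> | ZP];
  apply/implyP => YZ.
- by rewrite eqxx in YZ.
- by apply: tX; rewrite // eq_sym.
- by rewrite setIC; apply: tX.
by move/forall_inP: (Aplus_tint A) => /(_ Y YP)/forall_inP/(_ Z ZP); rewrite YZ.
Qed.

(* If l(F,t) >= 2, a member X of a largest L meets itself in at least
   #|X :&: Z| >= t elements for another Z in L. Otherwise the one-element
   family of a largest member of F is largest, and that member meets itself
   in alpha(F) >= t elements. *)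
Lemma exists_largest_tint_self_cross F :
  t <= alpha F ->
  exists L, largest_tint F t L /\ forall X Y, X \in L -> Y \in L -> t <= #|X :&: Y|.
Proof.
move=> tF; have [L lL] := exists_largest_tint F.
move: (lL) => /and3P[sLF /forall_inP tL /eqP cL].
have [le1 | lt1] := leqP (lFt F t) 1; last first.
  exists L; split => // X Y XL YL; case: (eqVneq X Y) => [<- | XY]; last first.
    by move/forall_inP: (tL X XL) => /(_ Y YL); rewrite XY.
  have /set0Pn[Z /setD1P[ZX ZL]] : L :\ X != set0.
    by rewrite -card_gt0; move: lt1; rewrite -cL (cardsD1 X L) XL.
  move/forall_inP: (tL Z ZL) => /(_ X XL); rewrite ZX setIid => /leq_trans; apply.
  by rewrite subset_leq_card ?subsetIr.
have [F0 | F0] := eqVneq F set0.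
  exists L; split=> // X Y XL.
  by move: sLF; rewrite F0 subset0 => /eqP L0; rewrite L0 inE in XL.
have [X XF XF_max] : {X | X \in F & \max_(Y in F) #|Y| = #|X|}.
  by apply: bigop.eq_bigmax_cond; rewrite card_gt0.
exists [set X]; split; last by move=> Y Z /set1P -> /set1P ->; rewrite setIid -XF_max.
rewrite /largest_tint sub1set XF t_intersecting1 cards1 /=.
by rewrite eqn_leq le1 andbT lFt_gt0.
Qed.

Lemma betaA_gt0 F A : F != set0 -> A \subset F -> (0 < betaA F t A)%R.
Proof.
move=> F0 sAF; rewrite /betaA; case: ifP => AM.
  by rewrite divr_gt0 ?ltr0n ?card_gt0 // subr_gt0 ltr_nat card_Aplus_lt_lFt.
by rewrite divr_gt0 ?ltr0n ?card_gt0 ?lFt_gt0.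
Qed.

Lemma betaF_le_betaA F A : A \subset F -> (betaF F t <= betaA F t A)%R.
Proof. by move=> sAF; rewrite /betaF; case: arg_minP => [|B _]; [apply: sub0set | apply]. Qed.

Lemma betaF_gt0 F : F != set0 -> (0 < betaF F t)%R.
Proof.
by move=> F0; rewrite /betaF; case: arg_minP => [|B sBF _]; [apply: sub0set | apply: betaA_gt0].
Qed.

Lemma card_Aminus_le k F A : A \subset F -> (1 <= k%:R * betaF F t)%R ->
  #|Aminus t A| <= k * (lFt F t - #|Aplus t A|).
Proof.
move=> sAF kbeta; have [-> | AM] := eqVneq (Aminus t A) set0; first by rewrite cards0.
have : (1 <= k%:R * betaA F t A)%R.
  by apply: (le_trans kbeta); rewrite ler_wpM2l ?betaF_le_betaA.
rewrite /betaA AM mulrA ler_pdivlMr ?ltr0n ?card_gt0 // mul1r.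
by rewrite -natrB ?(ltnW (card_Aplus_lt_lFt sAF AM)) // -natrM ler_nat.
Qed.

Lemma card_Aminus_lt k F A : A \subset F -> (1 < k%:R * betaF F t)%R ->
  Aminus t A != set0 -> #|Aminus t A| < k * (lFt F t - #|Aplus t A|).
Proof.
move=> sAF kbeta AM; have : (1 < k%:R * betaA F t A)%R.
  by apply: (lt_le_trans kbeta); rewrite ler_wpM2l ?betaF_le_betaA.
rewrite /betaA AM mulrA ltr_pdivlMr ?ltr0n ?card_gt0 // mul1r.
by rewrite -natrB ?(ltnW (card_Aplus_lt_lFt sAF AM)) // -natrM ltr_nat.
Qed.

End IntersectingFamilies.

Section CrossIntersecting.
Variables (T : finType) (t k : nat) (F : {set {set T}}) (As : 'I_k -> {set {set T}}).
Hypotheses (AsF : forall i, As i \subset F) (As_cross : cross_tint t As).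
Local Notation U := (\bigcup_(i < k) As i).

Lemma bigcup_cross_subset : U \subset F.
Proof. by apply/bigcupsP => i _; apply: AsF. Qed.

Lemma card_indices_Aminus X :
  X \in Aminus t U -> #|[pred i | X \in As i]| <= 1.
Proof.
rewrite inE => /andP[XnP XU]; move: XnP; rewrite inE XU => /forall_inPn[Y YU].
rewrite negb_imply => /andP[_ XYt]; have /bigcupP[m _ YAm] := YU.
rewrite -(card1 m) subset_leq_card //; apply/subsetP => i; rewrite !inE => XAi.
by apply: contraLR XYt => im; rewrite negbK (As_cross im XAi YAm).
Qed.

Lemma sum_card_cross_le :
  \sum_(i < k) #|As i| <= k * #|Aplus t U| + #|Aminus t U|.
Proof.
have cardE i : #|As i| = \sum_(X in U) (X \in As i).
  rewrite -sum1_card big_mkcond /= [RHS]big_mkcond /=; apply: eq_bigr => X _.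
  case: (boolP (X \in As i)) => XAi; last by case: (X \in U).
  by rewrite (subsetP (bigcup_sup i isT) X XAi).
rewrite (eq_bigr _ (fun i _ => cardE i)) exchange_big /=.
rewrite (big_setID (Aplus t U)) /= (setIidPr (Aplus_subset _ _)) mulnC -sum_nat_const.
rewrite -/(Aminus t U) -sum1_card leq_add //; apply: leq_sum => X XUM.
  rewrite -[leqRHS]muln1 -[k in k * 1]card_ord -sum_nat_const.
  by apply: leq_sum => i _; apply: leq_b1.
by have := card_indices_Aminus XUM; rewrite -sum1_card big_mkcond.
Qed.

Lemma sum_card_cross_le_lFt : (1 <= k%:R * betaF F t)%R ->
  \sum_(i < k) #|As i| <= k * lFt F t.
Proof.
move=> kbeta; have sUF := bigcup_cross_subset.
have Pl := card_Aplus_le_lFt t sUF.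
have := card_Aminus_le sUF kbeta; have := sum_card_cross_le; nia.
Qed.

Lemma cross_uniform_of_sum_eq : 0 < k -> (1 < k%:R * betaF F t)%R ->
  \sum_(i < k) #|As i| = k * lFt F t ->
  exists L, largest_tint F t L /\ forall i, As i = L.
Proof.
move=> k0 kbeta sum_eq; have sUF := bigcup_cross_subset.
have Pl := card_Aplus_le_lFt t sUF.
have M0 : Aminus t U = set0.
  apply/eqP; apply: contraT => AM; have := card_Aminus_lt sUF kbeta AM.
  by have := sum_card_cross_le; nia.
have tU : t_intersecting t U by rewrite -(Aplus_id_of_Aminus0 M0) Aplus_tint.
have Ul : #|U| <= lFt F t := card_le_lFt sUF tU.
have AsU i : As i \subset U := bigcup_sup i isT.
have As_l := eq_bound_of_sum_eq (fun i => leq_trans (subset_leq_card (AsU i)) Ul) sum_eq.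
have cU : #|U| = lFt F t.
  by apply/eqP; rewrite eqn_leq Ul -(As_l (Ordinal k0)) subset_leq_card.
exists U; split; first by rewrite /largest_tint sUF tU cU eqxx.
by move=> i; apply/eqP; rewrite eqEcard AsU As_l cU /=.
Qed.

End CrossIntersecting.

Theorem theorem1p1 (T : finType) (t k : nat) (F : {set {set T}})
    (As : 'I_k -> {set {set T}}) :
  1 <= t -> 1 <= k -> t <= alpha F ->
  (forall i, As i \subset F) ->
  cross_tint t As ->
  ((kappa F t <= k%:R)%R ->
     [/\ \sum_(i < k) #|As i| <= k * lFt F t,
         \prod_(i < k) #|As i| <= lFt F t ^ k &
         exists L : {set {set T}}, [/\ largest_tint F t L,
                       cross_tint t (fun _ : 'I_k => L),
                       \sum_(i < k) #|L| = k * lFt F t &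
                       \prod_(i < k) #|L| = lFt F t ^ k]])
  /\
  ((kappa F t < k%:R)%R ->
     (\sum_(i < k) #|As i| = k * lFt F t ->
        exists L : {set {set T}}, largest_tint F t L /\ forall i, As i = L) /\
     (\prod_(i < k) #|As i| = lFt F t ^ k ->
        exists L : {set {set T}}, largest_tint F t L /\ forall i, As i = L)).
Proof.
move=> t1 k1 tF AsF cross.
have F0 : F != set0 by apply: contraTneq tF => ->; rewrite /alpha big_set0 -ltnNge.
have beta0 := betaF_gt0 t F0.
have sum_le := sum_card_cross_le_lFt AsF cross.
have uniform := cross_uniform_of_sum_eq AsF cross k1.
split=> kbeta; rewrite /kappa -div1r in kbeta.
  rewrite ler_pdivrMr // in kbeta; have sum_As := sum_le kbeta.
  split; [by [] | exact: prod_le_pow_of_sum_le |].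
  have [L [/[dup] lL /and3P[_ _ /eqP cL] Lself]] := exists_largest_tint_self_cross tF.
  exists L; split=> //; first by move=> i j _; apply: Lself.
    by rewrite sum_nat_const card_ord cL.
  by rewrite prod_nat_const card_ord cL.
rewrite ltr_pdivrMr // in kbeta.
split=> [| /sum_ge_of_prod_eq_pow prod_eq]; apply: uniform => //.
by apply/eqP; rewrite eqn_leq prod_eq sum_le ?ltW.
Qed.
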